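(* Let $n\geq1$ and $A\in M_n(\mathbb Z)$ with $\det(A)\neq0$. Then there exist integers $n_1,n_2\geq0$ with $n_1+n_2=n$, a matrix $A_1\in M_{n_1}(\mathbb Z)$ all of whose eigenvalues are roots of unity, a positive matrix $A_2\in M_{n_2}(\mathbb Z)$, and $P\in M_n(\mathbb Z)$ with $\det(P)\neq0$ such that $\varphi_A\circ\varphi_P=\varphi_P\circ g$, where $g:\mathbb G_m^n=\mathbb G_m^{n_1}\times\mathbb G_m^{n_2}\to\mathbb G_m^{n_1}\times\mathbb G_m^{n_2}$ is $g(u_1,u_2)=(\varphi_{A_1}(u_1),\varphi_{A_2}(u_2))$.
   Context: Work over an algebraically closed field of characteristic zero. For $A=(a_{ij})\in M_n(\mathbb Z)$, $\varphi_A:\mathbb G_m^n\to\mathbb G_m^n$ is the group endomorphism $(u_1,\dots,u_n)\mapsto(u_1^{a_{11}}\cdots u_n^{a_{1n}},\dots,u_1^{a_{n1}}\cdots u_n^{a_{nn}})$. A matrix $A$ is positive if every eigenvalue of $A$ is neither $0$ nor a root of unity. *)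

From HB Require Import structures.
From mathcomp Require Import all_boot all_order all_algebra.
Set Implicit Arguments. Unset Strict Implicit. Unset Printing Implicit Defensive.
Import Order.TTheory GRing.Theory Num.Theory.
Local Open Scope ring_scope.

(* Points of G_m^n over a field K are represented as functions 'I_n -> K;
   membership in the torus is the condition that every coordinate is nonzero. *)
Definition in_torus (K : fieldType) (n : nat) (u : 'I_n -> K) : Prop :=
  forall i, u i != 0.

Definition phi (K : fieldType) (n : nat) (A : 'M[int]_n) (u : 'I_n -> K)
  : 'I_n -> K :=
  fun i => \prod_(j < n) (u j) ^ (A i j).

Definition mxK (K : fieldType) (n : nat) (A : 'M[int]_n) : 'M[K]_n :=
  map_mx (fun z : int => z%:~R) A.

Definition root_of_unity (K : fieldType) (x : K) : Prop :=
  exists k : nat, (0 < k)%N /\ x ^+ k = 1.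

Definition unipotent_eigs (K : fieldType) (n : nat) (A : 'M[int]_n) : Prop :=
  forall a : K, eigenvalue (mxK K A) a -> root_of_unity a.

Definition positive_mx (K : fieldType) (n : nat) (A : 'M[int]_n) : Prop :=
  forall a : K, eigenvalue (mxK K A) a -> a != 0 /\ ~ root_of_unity a.

(* g(u1,u2) = (phi_{A1} u1, phi_{A2} u2) on G_m^{n1} x G_m^{n2} = G_m^n *)
Definition split_map (K : fieldType) (n1 n2 n : nat) (H : (n1 + n2)%N = n)
  (A1 : 'M[int]_n1) (A2 : 'M[int]_n2) (u : 'I_n -> K) : 'I_n -> K :=
  fun i =>
    match split (cast_ord (esym H) i) with
    | inl j => phi A1 (fun k => u (cast_ord H (lshift n2 k))) j
    | inr j => phi A2 (fun k => u (cast_ord H (rshift n1 k))) j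
    end.

(* Pick N with a^N = 1 for every eigenvalue a of A that is a root of unity, and
   M so large that ker C^M and im C^M meet trivially for C = A^N - 1 (Fitting).
   The integer matrix B = (A^N - 1)^M commutes with A, so the lattice ker B and
   the saturation of im B are A-invariant; together they span a sublattice of
   full rank, since ker B and im B are complementary over K. On ker B the
   matrix A^N - 1 is nilpotent, so all eigenvalues there are roots of unity. On
   im B an eigenvalue is nonzero because A is invertible, and it cannot be a
   root of unity, since its eigenvector would lie in ker B and in im B. In a
   basis P adapted to both lattices, A P = P diag(A1, A2), and
   phi_A o phi_P = phi_(AP) = phi_P o phi_(diag(A1, A2)) on the torus. *)

From Pilot Require Import Defs.
From HB Require Import structures.
From mathcomp Require Import all_boot all_order all_algebra.
From Stdlib Require Import Classical FunctionalExtensionality.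
Set Implicit Arguments. Unset Strict Implicit. Unset Printing Implicit Defensive.
Import Order.TTheory GRing.Theory Num.Theory.
Local Open Scope ring_scope.

Section FieldMatrices.
Variable F : fieldType.

Lemma char_poly_trmx n (A : 'M[F]_n) : char_poly A^T = char_poly A.
Proof.
rewrite /char_poly -det_tr /char_poly_mx linearB /= tr_scalar_mx.
by congr (\det (_ - _)); apply/matrixP => i j; rewrite !mxE.
Qed.

Lemma eigenvalue_trmx n (A : 'M[F]_n) : eigenvalue A^T =1 eigenvalue A.
Proof. by move=> a; rewrite !eigenvalue_root_char char_poly_trmx. Qed.

Lemma eigenvalue_colP n (A : 'M[F]_n) a :
  reflect (exists2 v : 'cV_n, v != 0 & A *m v = a *: v) (eigenvalue A a).
Proof.
rewrite -eigenvalue_trmx; apply: (iffP eigenvalueP) => -[v].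
  move=> Av vn0; exists v^T; first by rewrite trmx_eq0.
  by rewrite -[A]trmxK -trmx_mul Av linearZ.
by move=> vn0 Av; exists v^T; rewrite ?trmx_eq0 // -trmx_mul Av linearZ.
Qed.

Lemma mulmx_eigen_exp m n (A : 'M[F]_n) (v : 'M_(n, m)) a j :
  A *m v = a *: v -> A ^+ j *m v = a ^+ j *: v.
Proof.
move=> Av; elim: j => [|j IHj]; first by rewrite expr0 scale1r mul1mx.
by rewrite exprS -mulmxE -mulmxA IHj -scalemxAr Av scalerA exprSr.
Qed.

Lemma unitmx_mulmx_inj n (A : 'M[F]_n) :
  (forall v : 'cV_n, A *m v = 0 -> v = 0) -> A \in unitmx.
Proof.
move=> Ainj; rewrite unitmxE unitfE -det_tr; apply/det0P => -[v vn0 vA].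
by move: vn0; rewrite -trmx_eq0 (Ainj v^T) ?eqxx // -[A]trmxK -trmx_mul vA linear0.
Qed.

Lemma eigenvalue_root_of_unity n (A : 'M[F]_n) N M a : (0 < N)%N ->
  (A ^+ N - 1) ^+ M = 0 -> eigenvalue A a -> Defs.root_of_unity a.
Proof.
move=> N_gt0 nilA /eigenvalue_colP[v vn0 Av]; exists N; split => //.
have AN1v : (A ^+ N - 1) *m v = (a ^+ N - 1) *: v.
  by rewrite mulmxBl mul1mx (mulmx_eigen_exp N Av) scalerBl scale1r.
move: (mulmx_eigen_exp M AN1v); rewrite nilA mul0mx => /esym/eqP.
by rewrite scaler_eq0 (negbTE vn0) orbF expf_eq0 subr_eq0 => /andP[_ /eqP].
Qed.

(* m is the multiplicity of 0 as an eigenvalue of C. *)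
Lemma Fitting_exponent n (C : 'M[F]_n.+1) :
  exists m, forall M, (m <= M)%N -> forall w z : 'cV_n.+1,
    C ^+ M *m w = 0 -> w = C ^+ M *m z -> w = 0.
Proof.
have [m [g g0 chiC]] := multiplicity_XsubC (char_poly C) 0.
rewrite monic_neq0 ?char_poly_monic //= polyC0 subr0 in g0 chiC.
exists m => M leMm w z CMw0 wCz.
have gCM : horner_mx C g * C ^+ M = 0.
  have -> : horner_mx C g * C ^+ M = horner_mx C ('X ^+ (M - m) * (g * 'X ^+ m)).
    by rewrite mulrCA -exprD subnK // rmorphM rmorphXn /= horner_mx_X.
  by rewrite -chiC rmorphM /= Cayley_Hamilton mulr0.
have /Bezout_eq1_coprimepP[[u v] /= uv] : coprimep ('X ^+ M) g.
  by rewrite coprimep_expl // coprimep_sym -['X]subr0 -polyC0 coprimep_XsubC.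
have := congr1 (horner_mx C) uv; rewrite rmorph1 rmorphD !rmorphM /= rmorphXn /=.
rewrite horner_mx_X => /(congr1 (mulmx^~ w)); rewrite mul1mx => <-.
rewrite mulmxDl -!mulmxE -!mulmxA CMw0 [in X in _ + X]wCz (mulmxA (horner_mx C g)).
by rewrite mulmxE gCM mul0mx !mulmx0 addr0.
Qed.

End FieldMatrices.

Lemma seq_root_of_unity_exponent (K : fieldType) (s : seq K) :
  exists2 N, (0 < N)%N & forall a, a \in s -> Defs.root_of_unity a -> a ^+ N = 1.
Proof.
elim: s => [|z s [N N_gt0 sN]]; first by exists 1%N.
have [[k [k_gt0 zk]] | z_not_root] := classic (Defs.root_of_unity z).
  exists (k * N)%N => [|a]; first by rewrite muln_gt0 k_gt0.
  rewrite inE => /orP[/eqP-> _ | a_s a_root]; first by rewrite exprM zk expr1n.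
  by rewrite mulnC exprM sN // expr1n.
by exists N => // a; rewrite inE => /orP[/eqP-> // | /sN].
Qed.

Lemma root_of_unity_exponent (K : closedFieldType) n (A : 'M[K]_n) :
  exists2 N, (0 < N)%N & forall a, eigenvalue A a -> Defs.root_of_unity a -> a ^+ N = 1.
Proof.
have [s chiA] := closed_field_poly_normal (char_poly A).
have [N N_gt0 sN] := seq_root_of_unity_exponent s.
exists N => // a; rewrite eigenvalue_root_char chiA (monicP (char_poly_monic A)).
by rewrite scale1r root_prod_XsubC => /sN.
Qed.

Lemma mulmx_intertwine_exp (R : pzRingType) m k (A : 'M[R]_m) (A' : 'M_k) (P : 'M_(m, k)) j :
  A *m P = P *m A' -> A ^+ j *m P = P *m A' ^+ j.
Proof.
move=> AP; elim: j => [|j IHj]; first by rewrite !expr0 mul1mx mulmx1.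
by rewrite !exprS -!mulmxE -mulmxA IHj !mulmxA AP.
Qed.

Section BlockMatrices.
Variables (R : pzRingType) (r k : nat).

Lemma rsubmx_mul_lower m (T : 'M[R]_(m, r + k)) (X : 'M_(r + k)) :
  ursubmx X = 0 -> rsubmx (T *m X) = rsubmx T *m drsubmx X.
Proof.
move=> X12; rewrite -{1}[T]hsubmxK -{1}[X]submxK X12 mul_row_block.
by rewrite mulmx0 add0r row_mxKr.
Qed.

Lemma lsubmx_mul_upper m (T : 'M[R]_(m, r + k)) (Y : 'M_(r + k)) :
  dlsubmx Y = 0 -> lsubmx (T *m Y) = lsubmx T *m ulsubmx Y.
Proof.
move=> Y21; rewrite -{1}[T]hsubmxK -{1}[Y]submxK Y21 mul_row_block.
by rewrite mulmx0 addr0 row_mxKl.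
Qed.

Lemma submx_mulmx1 (U V : 'M[R]_(r + k)) : U *m V = 1%:M ->
  usubmx U *m lsubmx V = 1%:M /\ dsubmx U *m rsubmx V = 1%:M.
Proof.
by rewrite -{1}[U]vsubmxK -{1}[V]hsubmxK mul_col_row scalar_mx_block => /eq_block_mx[].
Qed.

End BlockMatrices.

Section IdomainMatrices.
Variable R : idomainType.

Lemma det_lreg_mx r m (D : 'M[R]_r) (Z : 'M_(r, m)) :
  \det D != 0 -> D *m Z = 0 -> Z = 0.
Proof.
move=> dD /(congr1 (mulmx (\adj D))); rewrite mulmxA mul_adj_mx mul_scalar_mx mulmx0.
by move=> /eqP; rewrite scalemx_eq0 (negbTE dD) => /eqP.
Qed.

Lemma det_rreg_mx r m (D : 'M[R]_r) (Z : 'M_(m, r)) :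
  \det D != 0 -> Z *m D = 0 -> Z = 0.
Proof.
move=> dD /(congr1 (mulmx^~ (\adj D))); rewrite -mulmxA mul_mx_adj mul0mx mul_mx_scalar.
by move=> /eqP; rewrite scalemx_eq0 (negbTE dD) => /eqP.
Qed.

Lemma block_mx_intertwine r k (D : 'M[R]_r) (X Y : 'M[R]_(r + k)) :
  \det D != 0 -> block_mx D 0 0 0 *m X = Y *m block_mx D 0 0 0 ->
  ursubmx X = 0 /\ dlsubmx Y = 0.
Proof.
move=> dD; rewrite -{1}[X]submxK -{1}[Y]submxK !mulmx_block !mul0mx !mulmx0 !addr0.
by case/eq_block_mx => _ DX YD _; split; [apply: (det_lreg_mx dD) | apply: (det_rreg_mx dD)].
Qed.

Lemma Smith_diag_block r k (d : seq R) :
  (forall i : 'I_(r + k), (d`_i != 0) = (i < r)%N) ->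
  \matrix_(i < r + k, j < r + k) (d`_i *+ (i == j :> nat))
    = block_mx (diag_mx (\row_(i < r) d`_i)) 0 0 0.
Proof.
move=> d_neq0; apply/matrixP => i j.
case: (split_ordP i) => i' ->; case: (split_ordP j) => j' ->;
  rewrite ?block_mxEul ?block_mxEur ?block_mxEdl ?block_mxEdr !mxE //=.
- by rewrite (ltn_eqF (ltn_addr _ (ltn_ord i'))) mulr0n.
- by rewrite (gtn_eqF (ltn_addr _ (ltn_ord j'))) mulr0n.
- by move: (d_neq0 (rshift r i')); rewrite /= ltnNge leq_addr => /negbFE/eqP->; rewrite mul0rn.
Qed.

End IdomainMatrices.

Lemma sorted_dvdz_nth_neq0 (d : seq int) i :
  sorted dvdz d -> (d`_i != 0) = (i < find (pred1 0%R) d)%N.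
Proof.
move=> d_sorted; case: ltnP => [lt_i_f | le_f_i]; first by have /= -> := before_find 0 lt_i_f.
apply/negbTE; rewrite negbK.
case: (ltnP i (size d)) => [lt_i_d | ?]; last by rewrite nth_default.
have lt_f_d := leq_ltn_trans le_f_i lt_i_d.
have has_d0 : has (pred1 0%R) d by rewrite has_find.
have /eqP d_f0 := nth_find 0 has_d0.
have := sorted_leq_nth (@dvdz_trans) dvdzz 0 d_sorted.
by move=> /(_ _ _ lt_f_d lt_i_d le_f_i); rewrite d_f0 dvd0z.
Qed.

(* P1 is a basis of the lattice ker B and P2 one of the saturation of im B,
   both read off the Smith normal form B = L diag(D, 0) R. *)
Lemma commuting_lattice_split n (A B : 'M[int]_n) : A *m B = B *m A ->
  exists k r, (k + r = n)%N /\
  exists (P1 : 'M[int]_(n, k)) (Q1 : 'M_(k, n)) (A1 : 'M_k)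
         (P2 : 'M[int]_(n, r)) (Q2 : 'M_(r, n)) (A2 : 'M_r) (S : 'M_(n, r)) (D : 'M_r),
  [/\ A *m P1 = P1 *m A1, B *m P1 = 0 & Q1 *m P1 = 1%:M] /\
  [/\ A *m P2 = P2 *m A2, Q2 *m P2 = 1%:M, P2 *m D = B *m S & \det D != 0].
Proof.
move=> AB; have [L uL [R uR [d d_sorted defB]]] := int_Smith_normal_form B.
have [r [k [def_n d_neq0]]] :
    exists r k, n = (r + k)%N /\ forall i : 'I_n, (d`_i != 0) = (i < r)%N.
  exists (minn (find (pred1 0%R) d) n), (n - minn (find (pred1 0%R) d) n)%N.
  split=> [|i]; first by rewrite subnKC ?geq_minr.
  by rewrite leq_min ltn_ord andbT sorted_dvdz_nth_neq0.
subst n; rewrite Smith_diag_block // in defB.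
set D := diag_mx _ in defB.
have detD : \det D != 0.
  rewrite det_diag; apply/prodf_neq0 => i _; rewrite mxE.
  by rewrite (d_neq0 (lshift k i)) /= ltn_ord.
set Li := invmx L; set Ri := invmx R.
set X := R *m A *m Ri; set Y := Li *m A *m L.
have AR : A *m Ri = Ri *m X by rewrite /X !mulmxA (mulVmx uR) mul1mx.
have AL : A *m L = L *m Y by rewrite /Y !mulmxA (mulmxV uL) mul1mx.
have BR : B *m Ri = L *m block_mx D 0 0 0 by rewrite defB -mulmxA (mulmxV uR) mulmx1.
have [X12 Y21] : ursubmx X = 0 /\ dlsubmx Y = 0.
  apply: (block_mx_intertwine detD).
  have -> : block_mx D 0 0 0 = Li *m B *m Ri.
    by rewrite -mulmxA BR mulmxA (mulVmx uL) mul1mx.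
  rewrite /X /Y !mulmxA (mulmxKV uR) (mulmxK uL).
  by rewrite -(mulmxA Li A) -(mulmxA Li B) AB.
have [_ R_Ri] := submx_mulmx1 (mulmxV uR).
have [Li_L _] := submx_mulmx1 (mulVmx uL).
exists k, r; split; first exact: addnC.
exists (rsubmx Ri), (dsubmx R), (drsubmx X), (lsubmx L), (usubmx Li), (ulsubmx Y).
exists (lsubmx Ri), D.
split; split => //.
- by rewrite mulmx_rsub AR rsubmx_mul_lower.
- by rewrite mulmx_rsub BR -mulmx_rsub block_mxEh row_mxKr col_mx0 mulmx0.
- by rewrite mulmx_lsub AL lsubmx_mul_upper.
- by rewrite mulmx_lsub BR lsubmx_mul_upper ?block_mxKdl ?block_mxKul.
Qed.

Lemma pchar0_intr_eq0 (R : idomainType) (z : int) :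
  [pchar R] =i pred0 -> (z%:~R == 0 :> R) = (z == 0).
Proof.
move=> /pcharf0P R0; case: z => m; first by rewrite -pmulrn R0.
by rewrite NegzE mulrNz oppr_eq0 R0.
Qed.

Section IntegerMatricesOverField.
Variable K : fieldType.
Local Notation liftK := (map_mx (fun z : int => (z%:~R : K))).

Lemma map_intmx_linv_inj m k (P : 'M[int]_(m, k)) (Q : 'M_(k, m)) (x : 'cV[K]_k) :
  Q *m P = 1%:M -> liftK P *m x = 0 -> x = 0.
Proof.
move=> /(congr1 liftK); rewrite map_mxM map_mx1 => QP Px0.
by rewrite -[x]mul1mx -QP -mulmxA Px0 mulmx0.
Qed.

Lemma map_intmx_unit n (D : 'M[int]_n) :
  [pchar K] =i pred0 -> \det D != 0 -> liftK D \in unitmx.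
Proof. by move=> K0; rewrite unitmxE unitfE det_map_mx pchar0_intr_eq0. Qed.

Lemma det_row_mx_neq0 k r (P1 : 'M[int]_(k + r, k)) (P2 : 'M[int]_(k + r, r)) :
  (forall (x : 'cV_k) (y : 'cV_r), liftK P1 *m x + liftK P2 *m y = 0 -> x = 0 /\ y = 0) ->
  \det (row_mx P1 P2) != 0.
Proof.
move=> indep; have : liftK (row_mx P1 P2) \in unitmx.
  apply: unitmx_mulmx_inj => v; rewrite map_row_mx -[v]vsubmxK mul_row_col.
  by case/indep => -> ->; rewrite col_mx0.
by rewrite unitmxE unitfE det_map_mx; apply: contra => /eqP->; rewrite rmorph0.
Qed.

Section Spectral.
Variables (n N M : nat) (A : 'M[int]_n).
Let B := (A ^+ N - 1) ^+ M.
Hypotheses (K0 : [pchar K] =i pred0) (N_gt0 : (0 < N)%N) (M_gt0 : (0 < M)%N).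
Hypothesis AN1 : forall a, eigenvalue (mxK K A) a -> Defs.root_of_unity a -> a ^+ N = 1.
Hypothesis Fitting : forall w z : 'cV[K]_n, liftK B *m w = 0 -> w = liftK B *m z -> w = 0.

Lemma mulmx_intertwine_B k (A' : 'M_k) (P : 'M_(n, k)) :
  A *m P = P *m A' -> B *m P = P *m (A' ^+ N - 1) ^+ M.
Proof.
move=> AP; apply: mulmx_intertwine_exp.
by rewrite mulmxBl mulmxBr (mulmx_intertwine_exp _ AP) mul1mx mulmx1.
Qed.

Lemma kernel_unipotent k (P1 : 'M[int]_(n, k)) Q1 A1 :
  A *m P1 = P1 *m A1 -> B *m P1 = 0 -> Q1 *m P1 = 1%:M -> unipotent_eigs K A1.
Proof.
move=> AP1 BP1 QP1 a; apply: (eigenvalue_root_of_unity N_gt0 (M := M)).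
have A1nil : (A1 ^+ N - 1) ^+ M = 0.
  by rewrite -[_ ^+ M]mul1mx -QP1 -mulmxA -mulmx_intertwine_B // BP1 mulmx0.
move: (congr1 liftK A1nil).
by rewrite rmorphXn rmorphB rmorph1 rmorphXn map_mx0.
Qed.

Lemma image_in_B r (P2 : 'M[int]_(n, r)) S D :
  P2 *m D = B *m S -> \det D != 0 ->
  forall y : 'cV_r, exists z, liftK P2 *m y = liftK B *m z.
Proof.
move=> P2D detD y; exists (liftK S *m invmx (liftK D) *m y).
rewrite !mulmxA -map_mxM -P2D map_mxM -(mulmxA (liftK P2)).
by rewrite mulmxV ?mulmx1 // map_intmx_unit.
Qed.

Lemma image_positive r (P2 : 'M[int]_(n, r)) Q2 A2 S D :
  \det A != 0 -> A *m P2 = P2 *m A2 -> Q2 *m P2 = 1%:M ->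
  P2 *m D = B *m S -> \det D != 0 -> positive_mx K A2.
Proof.
move=> detA AP2 QP2 P2D detD a /eigenvalue_colP[w wn0 A2w].
set v := liftK P2 *m w.
have vn0 : v != 0 by apply: contra wn0 => /eqP/(map_intmx_linv_inj QP2)->.
have Av : mxK K A *m v = a *: v.
  by rewrite /v mulmxA -map_mxM AP2 map_mxM -mulmxA A2w scalemxAr.
split.
  apply: contra vn0 => /eqP a0.
  by rewrite -[v](mulKmx (map_intmx_unit K0 detA)) Av a0 scale0r mulmx0.
move=> /(AN1 (introT (eigenvalue_colP _ _) (ex_intro2 _ _ v vn0 Av))) aN1.
have Bv : liftK B *m v = 0.
  rewrite /B -(prednK M_gt0) rmorphXn rmorphB rmorph1 rmorphXn exprSr -mulmxE -mulmxA.
  by rewrite mulmxBl mul1mx (mulmx_eigen_exp N Av) aN1 scale1r subrr mulmx0.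
have [z vBz] := image_in_B P2D detD w.
by move: vn0; rewrite (Fitting Bv vBz) eqxx.
Qed.

Lemma kernel_image_independent k r (P1 : 'M[int]_(n, k)) Q1 (P2 : 'M[int]_(n, r)) Q2 S D :
  B *m P1 = 0 -> Q1 *m P1 = 1%:M -> Q2 *m P2 = 1%:M ->
  P2 *m D = B *m S -> \det D != 0 ->
  forall (x : 'cV_k) (y : 'cV_r), liftK P1 *m x + liftK P2 *m y = 0 -> x = 0 /\ y = 0.
Proof.
move=> BP1 QP1 QP2 P2D detD x y /eqP; rewrite addr_eq0 => /eqP P1x.
have [z P2y] := image_in_B P2D detD y.
have P1x0 : liftK P1 *m x = 0.
  apply: (Fitting (z := - z)); last by rewrite P1x P2y mulmxN.
  by rewrite mulmxA -map_mxM BP1 map_mx0 mul0mx.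
split; apply: map_intmx_linv_inj; [exact: QP1 | exact: P1x0 | exact: QP2 |].
by apply/eqP; rewrite -oppr_eq0 -P1x P1x0.
Qed.

End Spectral.

Lemma in_torus_phi n (A : 'M[int]_n) (u : 'I_n -> K) : in_torus u -> in_torus (phi A u).
Proof. by move=> u_neq0 i; apply/prodf_neq0 => j _; apply: expfz_neq0. Qed.

Lemma phi_mul n (A P : 'M[int]_n) (u : 'I_n -> K) :
  in_torus u -> phi A (phi P u) = phi (A *m P) u.
Proof.
move=> u_neq0; apply: functional_extensionality => i; rewrite /phi.
under eq_bigr => j _ do
  rewrite (big_morph (fun x => x ^ A i j) (fun x y => expfzMl x y _) (exp1rz _ _)).
rewrite exchange_big /=; apply: eq_bigr => l _; rewrite mxE.
under eq_bigr => j _ do rewrite exprz_exp mulrC.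
by elim/big_rec2: _ => [|j x y _ ->]; rewrite ?expr0z // expfzDr.
Qed.

Lemma split_map_block k r (A1 : 'M[int]_k) (A2 : 'M[int]_r) (u : 'I_(k + r) -> K) :
  split_map (erefl (k + r)%N) A1 A2 u = phi (block_mx A1 0 0 A2) u.
Proof.
apply: functional_extensionality => i; rewrite /split_map /phi big_split_ord /= cast_ord_id.
case: split_ordP => j ->.
  rewrite [X in _ = _ * X]big1 => [|l _]; last by rewrite block_mxEur mxE expr0z.
  by rewrite mulr1; apply: eq_bigr => l _; rewrite block_mxEul cast_ord_id.
rewrite [X in _ = X * _]big1 => [|l _]; last by rewrite block_mxEdl mxE expr0z.
by rewrite mul1r; apply: eq_bigr => l _; rewrite block_mxEdr cast_ord_id.
Qed.

Lemma phi_block_conj n k r (H : (k + r)%N = n) (A : 'M[int]_n) (A1 : 'M_k) (A2 : 'M_r)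
    (P1 : 'M[int]_(n, k)) (P2 : 'M[int]_(n, r)) :
  A *m P1 = P1 *m A1 -> A *m P2 = P2 *m A2 ->
  (forall (x : 'cV_k) (y : 'cV_r), liftK P1 *m x + liftK P2 *m y = 0 -> x = 0 /\ y = 0) ->
  exists2 P : 'M[int]_n, \det P != 0 &
    forall u : 'I_n -> K, in_torus u -> phi A (phi P u) = phi P (split_map H A1 A2 u).
Proof.
subst n => AP1 AP2 indep; exists (row_mx P1 P2); first exact: det_row_mx_neq0 indep.
move=> u u_neq0; rewrite phi_mul // split_map_block phi_mul ?in_torus_phi //.
by rewrite mul_mx_row mul_row_block !mulmx0 addr0 add0r AP1 AP2.
Qed.

End IntegerMatricesOverField.

Theorem lemma2p6 (K : closedFieldType) (HK : [pchar K] =i pred0)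
  (n : nat) (Hn : (1 <= n)%N) (A : 'M[int]_n) (HA : \det A != 0) :
  exists (n1 n2 : nat) (H : (n1 + n2)%N = n)
         (A1 : 'M[int]_n1) (A2 : 'M[int]_n2) (P : 'M[int]_n),
    [/\ unipotent_eigs K A1, positive_mx K A2, \det P != 0 &
        forall u : 'I_n -> K, in_torus u ->
          phi A (phi P u) = phi P (split_map H A1 A2 u)].
Proof.
case: n Hn A HA => [//|n] _ A detA.
have [N N_gt0 AN1] := root_of_unity_exponent (mxK K A).
have [m Fitting] := Fitting_exponent (mxK K A ^+ N - 1).
pose B := (A ^+ N - 1) ^+ m.+1.
have AB : A *m B = B *m A.
  by rewrite mulmxE; apply/commrX/commrB; [apply/commrX/commr_refl | apply: commr1].
have FittingB : forall w z : 'cV[K]_n.+1, mxK K B *m w = 0 -> w = mxK K B *m z -> w = 0.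
  by rewrite /mxK rmorphXn rmorphB rmorph1 rmorphXn; apply: Fitting.
have [k [r [def_n [P1 [Q1 [A1 [P2 [Q2 [A2 [S [D]]]]]]]]]]] := commuting_lattice_split AB.
case=> -[AP1 BP1 QP1] [AP2 QP2 P2D detD].
have [P detP conjP] := phi_block_conj def_n AP1 AP2
  (kernel_image_independent HK FittingB BP1 QP1 QP2 P2D detD).
exists k, r, def_n, A1, A2, P; split => //.
  exact: (kernel_unipotent (K := K) N_gt0 AP1 BP1 QP1).
exact: (image_positive HK (ltn0Sn m) AN1 FittingB detA AP2 QP2 P2D detD).
Qed.
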